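(* Let $p$ be a prime, $u_1>u_2\ge 1$ integers, $s_1=p^{u_1}$, $s_2=p^{u_2}$, $F=\mathrm{GF}(s_1)$ and $G=\mathrm{GF}(s_2)$ represented as below, and let $\delta$ be either the truncation projection $\phi$ or the modulus projection $\varphi$. If $D$ is a difference matrix $D(b,c,s_1)$ with entries in $F$ (over the additive group of $F$), then $\delta(D)$ is a difference matrix $D(b,c,s_2)$ over the additive group of $G$.
   Context: $F$ is represented as the set of polynomials over $\mathrm{GF}(p)$ of degree less than $u_1$ with arithmetic modulo an irreducible polynomial $p_1(x)$ of degree $u_1$; $G$ is represented as the polynomials over $\mathrm{GF}(p)$ of degree less than $u_2$ with arithmetic modulo an irreducible polynomial $p_2(x)$ of degree $u_2$. The truncation projection is $\phi(a_0+a_1x+\cdots+a_{u_1-1}x^{u_1-1})=a_0+\cdots+a_{u_2-1}x^{u_2-1}$; the modulus projection is $\varphi(f(x))=f(x)\bmod p_2(x)$. For an array $D$, $\delta(D)$ denotes entrywise application of $\delta$. A difference matrix $D(b,c,g)$ over a finite abelian group of order $g$ is a $b\times c$ array with entries in the group such that, for any two distinct columns, their entrywise difference contains every group element equally often. *)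

From mathcomp Require Import all_boot all_order all_algebra.
Set Implicit Arguments. Unset Strict Implicit. Unset Printing Implicit Defensive.
Import GRing.Theory.
Local Open Scope ring_scope.

(* The elements of GF(p^u) in the polynomial representation: polynomials over
   GF(p) of degree < u, i.e. of size <= u (the zero polynomial has size 0). *)
Definition polyrep (p u : nat) : pred {poly 'F_p} :=
  fun f => (size f <= u)%N.

Definition trunc_proj (p u2 : nat) (f : {poly 'F_p}) : {poly 'F_p} :=
  \poly_(i < u2) f`_i.

Definition mod_proj (p : nat) (p2 : {poly 'F_p}) (f : {poly 'F_p}) : {poly 'F_p} :=
  f %% p2.

Definition is_diff_matrix (p b c : nat) (S : pred {poly 'F_p})
    (D : 'I_b -> 'I_c -> {poly 'F_p}) : Prop :=
  (forall i j, S (D i j)) /\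
  (forall j j' : 'I_c, j != j' ->
     forall x y, S x -> S y ->
       #|[set i : 'I_b | D i j - D i j' == x]| =
       #|[set i : 'I_b | D i j - D i j' == y]|).

From HB Require Import structures.
From mathcomp Require Import all_boot all_order all_algebra.

Set Implicit Arguments.
Unset Strict Implicit.
Unset Printing Implicit Defensive.
Local Open Scope ring_scope.
Import GRing.Theory.

(* Both projections are additive retractions of polynomials of size <= u1
   onto polynomials of size <= u2.  The fibres of such a retraction all have
   the same size, since translating by a polynomial of size <= u2 maps one
   fibre onto another.  Hence a column difference that takes every value of F
   equally often is mapped to one that takes every value of G equally often. *)

Lemma size_polyB_leq (R : nzRingType) n (p q : {poly R}) :
  (size p <= n)%N -> (size q <= n)%N -> (size (p - q)%R <= n)%N.
Proof. by move=> sp sq; rewrite (leq_trans (size_polyD _ _)) // size_polyN geq_max sp sq. Qed.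

Lemma npolyp_eq (R : nzSemiRingType) n (p : {poly R}) (t : {poly_n R}) :
  (size p <= n)%N -> (npolyp n p == t) = (p == t).
Proof. by move=> sp; rewrite -val_eqE /= npolypK. Qed.

Section EquidistributedRetraction.
Variables (R : finNzRingType) (n m : nat) (delta : {poly R} -> {poly R}).
Hypotheses (le_mn : (m <= n)%N) (delta_zmod : zmod_morphism delta).
Hypothesis delta_id : forall a : {poly R}, (size a <= m)%N -> delta a = a.

#[local] HB.instance Definition _ := Algebra.isZmodMorphism.Build _ _ delta delta_zmod.

Definition fibre (x : {poly R}) := [set t : {poly_n R} | delta t == x].

Lemma card_fibre (x y : {poly R}) :
  (size x <= m)%N -> (size y <= m)%N -> #|fibre x| = #|fibre y|.
Proof.
move=> sx sy; pose w : {poly_n R} := npolyp n (y - x).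
have size_yx := size_polyB_leq sy sx.
have delta_w : delta w = y - x by rewrite npolypK ?delta_id // (leq_trans size_yx).
rewrite -(card_imset _ (addIr w)); apply: eq_card => t.
rewrite inE; apply/imsetP/eqP => [[s] | delta_t].
  by rewrite inE => /eqP delta_s ->; rewrite /= raddfD /= delta_s delta_w addrC subrK.
exists (t - w); last by rewrite subrK.
by rewrite inE /= raddfB /= delta_t delta_w opprB addrC subrK.
Qed.

Lemma card_preim_delta (I : finType) (d : I -> {poly R}) (N : nat) (x : {poly R}) :
  (forall i, (size (d i) <= n)%N) ->
  (forall z : {poly R}, (size z <= n)%N -> #|[set i | d i == z]| = N) ->
  #|[set i | delta (d i) == x]| = (#|fibre x| * N)%N.
Proof.
move=> size_d card_d; pose dn i : {poly_n R} := npolyp n (d i).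
rewrite -sum1_card (partition_big dn (mem (fibre x))) => [|i]; last first.
  by rewrite !inE /dn npolypK.
rewrite -sum1_card big_distrl /=; apply: eq_bigr => t; rewrite inE => /eqP delta_t.
rewrite mul1n -(card_d t (size_npoly t)) -sum1_card; apply: eq_bigl => i.
rewrite !inE /dn npolyp_eq //.
by case: (d i =P t) => [->|]; rewrite ?delta_t ?eqxx ?andbF.
Qed.

Lemma equidistributed_delta (I : finType) (d : I -> {poly R}) :
  (forall i, (size (d i) <= n)%N) ->
  (forall z z' : {poly R}, (size z <= n)%N -> (size z' <= n)%N ->
     #|[set i | d i == z]| = #|[set i | d i == z']|) ->
  forall x y : {poly R}, (size x <= m)%N -> (size y <= m)%N ->
  #|[set i | delta (d i) == x]| = #|[set i | delta (d i) == y]|.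
Proof.
move=> size_d equi_d x y sx sy.
have card_d (z : {poly R}) :
    (size z <= n)%N -> #|[set i | d i == z]| = #|[set i | d i == 0]|.
  by move=> sz; apply: equi_d; rewrite ?size_poly0.
rewrite (card_preim_delta x size_d card_d) (card_preim_delta y size_d card_d).
by rewrite (card_fibre sx sy).
Qed.

End EquidistributedRetraction.

Definition additive_retraction (R : nzRingType) (m : nat) (delta : {poly R} -> {poly R}) :=
  [/\ zmod_morphism delta,
       forall a : {poly R}, (size a <= m)%N -> delta a = a
     & forall a : {poly R}, (size (delta a) <= m)%N].

Lemma diff_matrix_retraction (p b c n m : nat) (delta : {poly 'F_p} -> {poly 'F_p})
    (D : 'I_b -> 'I_c -> {poly 'F_p}) :
  (m <= n)%N -> additive_retraction m delta ->
  is_diff_matrix (@polyrep p n) D -> is_diff_matrix (@polyrep p m) (fun i j => delta (D i j)).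
Proof.
move=> le_mn [delta_zmod delta_id size_delta] [D_in D_equi].
split=> [i j | j j' neq_jj' x y sx sy]; first exact: size_delta.
have deltaB i : delta (D i j) - delta (D i j') = delta (D i j - D i j').
  by rewrite delta_zmod.
under eq_finset => i do rewrite deltaB.
under [in RHS]eq_finset => i do rewrite deltaB.
apply: (equidistributed_delta le_mn delta_zmod delta_id _ _ sx sy) => [i | z z'].
  exact: size_polyB_leq (D_in i j) (D_in i j').
exact: D_equi.
Qed.

Lemma trunc_proj_retraction (p m : nat) : additive_retraction m (trunc_proj (p := p) m).
Proof.
by split=> [a e|a|a]; [exact: (raddfB (take_poly m)) | exact: take_poly_id | exact: size_take_poly].
Qed.

Lemma mod_proj_retraction (p m : nat) (d : {poly 'F_p}) :
  size d = m.+1 -> additive_retraction m (mod_proj d).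
Proof.
move=> size_d; split=> [a e|a sa|a]; rewrite /mod_proj.
- by rewrite modpD modpN.
- by rewrite modp_small // size_d ltnS.
- by rewrite -ltnS -size_d ltn_modp -size_poly_eq0 size_d.
Qed.

Theorem lemma5 (p u1 u2 b c : nat) (p1 p2 : {poly 'F_p})
  (D : 'I_b -> 'I_c -> {poly 'F_p}) (delta : {poly 'F_p} -> {poly 'F_p}) :
  prime p -> (u2 < u1)%N -> (1 <= u2)%N ->
  irreducible_poly p1 -> size p1 = u1.+1 ->
  irreducible_poly p2 -> size p2 = u2.+1 ->
  (delta = trunc_proj u2 \/ delta = mod_proj p2) ->
  is_diff_matrix (@polyrep p u1) D ->
  is_diff_matrix (@polyrep p u2) (fun i j => delta (D i j)).
Proof.
move=> _ lt_u21 _ _ _ _ size_p2 delta_proj; apply: diff_matrix_retraction (ltnW lt_u21) _.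
by case: delta_proj => ->; [exact: trunc_proj_retraction | exact: mod_proj_retraction].
Qed.
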